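(* Let $\sigma:\mathbb{Z}\to\mathbb{Z}$ be an admissible injective function. Then for every $k\in\mathbb{Z}$ there exist record indices $r_-$ and $r_+$ of $\sigma$ with $r_-<k<r_+$.
   Context: $\sigma:\mathbb{Z}\to\mathbb{Z}$ is admissible if $|\{i\in\mathbb{N}:\sigma(i)\notin\mathbb{N}\}|+|\{i\in\mathbb{Z}\setminus\mathbb{N}:\sigma(i)\in\mathbb{N}\}|<\infty$, where $\mathbb{N}=\{1,2,\dots\}$. A record index of $\sigma$ is an $r\in\mathbb{Z}$ such that $\sigma(r)>\sigma(k)$ for all $k<r$. *)

From Stdlib Require Import ZArith List.
Open Scope Z_scope.

Definition inN (i : Z) : Prop := 1 <= i.

Definition finite_setZ (P : Z -> Prop) : Prop :=
  exists l : list Z, forall i, P i -> In i l.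

Definition admissible (sigma : Z -> Z) : Prop :=
  finite_setZ (fun i => inN i /\ ~ inN (sigma i)) /\
  finite_setZ (fun i => ~ inN i /\ inN (sigma i)).

Definition injectiveZ (sigma : Z -> Z) : Prop :=
  forall x y, sigma x = sigma y -> x = y.

Definition record_index (sigma : Z -> Z) (r : Z) : Prop :=
  forall k, k < r -> sigma k < sigma r.

(* For r_- take a point where sigma attains its maximum on (-oo, k-1]: that
   maximum exists because sigma i > 0 for only finitely many i <= 0, and by
   injectivity it is a strict record.  For r_+ take the first index after k
   whose value beats the maximum M of sigma on (-oo, k]; it exists because an
   injective sigma that maps almost all of N into N cannot stay in [1, M] on a
   whole ray. *)

From Stdlib Require Import ZArith List.
From Stdlib Require Import Lia Wf_nat Classical.
Open Scope Z_scope.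

Lemma Z_least_above (P : Z -> Prop) (a : Z) :
  (exists x, a <= x /\ P x) ->
  exists x, a <= x /\ P x /\ forall y, a <= y < x -> ~ P y.
Proof.
  intros [x [Hax Px]].
  pose (Q n := P (a + Z.of_nat n)).
  assert (Hleast : has_unique_least_element le Q).
  { apply dec_inh_nat_subset_has_unique_least_element.
    - intro n; apply classic.
    - exists (Z.to_nat (x - a)); unfold Q.
      now replace (a + Z.of_nat (Z.to_nat (x - a))) with x by lia. }
  destruct Hleast as [n [[Qn Hmin] _]].
  exists (a + Z.of_nat n); split; [lia | split; [exact Qn |]].
  intros y Hy Py.
  pose proof (Hmin (Z.to_nat (y - a))) as Hle.
  unfold Q in Hle; rewrite Z2Nat.id in Hle by lia.
  replace (a + (y - a)) with y in Hle by lia.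
  specialize (Hle Py); lia.
Qed.

Lemma Z_greatest_below (P : Z -> Prop) (b : Z) :
  (exists x, x <= b /\ P x) ->
  exists x, x <= b /\ P x /\ forall y, x < y <= b -> ~ P y.
Proof.
  intros [x [Hxb Px]].
  destruct (Z_least_above (fun y => P (- y)) (- b)) as [y [Hy [Py Hmin]]].
  { exists (- x); split; [lia | now rewrite Z.opp_involutive]. }
  exists (- y); split; [lia | split; [exact Py |]].
  intros z Hz Pz; apply (Hmin (- z)); [lia | now rewrite Z.opp_involutive].
Qed.

Lemma finite_setZ_subset (P Q : Z -> Prop) :
  (forall i, P i -> Q i) -> finite_setZ Q -> finite_setZ P.
Proof. intros HPQ [l Hl]; exists l; auto. Qed.

Lemma finite_setZ_union (P Q : Z -> Prop) :
  finite_setZ P -> finite_setZ Q -> finite_setZ (fun i => P i \/ Q i).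
Proof.
  intros [l Hl] [l' Hl']; exists (l ++ l').
  intros i [Pi | Qi]; apply in_or_app; auto.
Qed.

Lemma finite_setZ_interval (a b : Z) : finite_setZ (fun i => a <= i <= b).
Proof.
  exists (map (fun n => a + Z.of_nat n) (seq 0 (Z.to_nat (b - a + 1)))).
  intros i Hi; apply in_map_iff; exists (Z.to_nat (i - a)).
  split; [lia | apply in_seq; lia].
Qed.

Lemma finite_setZ_image (f : Z -> Z) (P : Z -> Prop) :
  finite_setZ P -> finite_setZ (fun v => exists i, P i /\ f i = v).
Proof.
  intros [l Hl]; exists (map f l).
  intros v [i [Pi <-]]; now apply in_map, Hl.
Qed.

(* No inverse of f is available, so the preimage list is built classically,
   choosing one preimage (if any) of each listed value. *)
Lemma finite_setZ_preimage (f : Z -> Z) (Q : Z -> Prop) :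
  injectiveZ f -> finite_setZ Q -> finite_setZ (fun i => Q (f i)).
Proof.
  intros Hinj [l Hl].
  assert (exists l', forall i, In (f i) l -> In i l') as [l' Hl'].
  { clear Hl; induction l as [| y l [l' IH]].
    - now exists nil.
    - destruct (classic (exists i, f i = y)) as [[j Hj] | Hnone].
      + exists (j :: l'); intros i [Hy | Hi]; [left | right; auto].
        apply Hinj; congruence.
      + exists l'; intros i [Hy | Hi]; [exfalso; eauto | auto]. }
  exists l'; auto.
Qed.

Lemma finite_setZ_bounded_above (P : Z -> Prop) :
  finite_setZ P -> exists U, forall i, P i -> i <= U.
Proof.
  intros [l Hl].
  assert (exists U, forall i, In i l -> i <= U) as [U HU].
  { clear Hl; induction l as [| x l IH].
    - now exists 0.
    - destruct IH as [U HU].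
      exists (Z.max x U); intros i [<- | Hi]; [lia | specialize (HU i Hi); lia]. }
  exists U; auto.
Qed.

Lemma not_finite_setZ_ray (a : Z) : ~ finite_setZ (fun i => a < i).
Proof.
  intros Hfin; destruct (finite_setZ_bounded_above _ Hfin) as [U HU].
  specialize (HU (Z.max a U + 1)); lia.
Qed.

Section Records.

Variable sigma : Z -> Z.
Hypothesis Hadm : admissible sigma.
Hypothesis Hinj : injectiveZ sigma.

Lemma admissible_bounded_above_left (m : Z) :
  exists U, forall j, j <= m -> sigma j <= U.
Proof.
  assert (Hpos : finite_setZ (fun j => j <= m /\ inN (sigma j))).
  { apply (finite_setZ_subset _ (fun j => (~ inN j /\ inN (sigma j)) \/ 1 <= j <= m)).
    - unfold inN; intros j [Hj Hs]; lia.
    - apply finite_setZ_union; [apply Hadm | apply finite_setZ_interval]. }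
  destruct (finite_setZ_bounded_above _ (finite_setZ_image sigma _ Hpos)) as [U HU].
  exists (Z.max 0 U); intros j Hj.
  destruct (Z_le_gt_dec 1 (sigma j)) as [Hs | Hs]; [| lia].
  pose proof (HU (sigma j) (ex_intro _ j (conj (conj Hj Hs) eq_refl))); lia.
Qed.

Lemma admissible_max_left (m : Z) :
  exists r, r <= m /\ forall j, j <= m -> sigma j <= sigma r.
Proof.
  destruct (admissible_bounded_above_left m) as [U HU].
  destruct (Z_greatest_below (fun v => exists j, j <= m /\ sigma j = v) U)
    as [v [_ [[r [Hr <-]] Hmax]]].
  { exists (sigma m); split; [apply HU; lia | now exists m]. }
  exists r; split; [exact Hr |]; intros j Hj.
  destruct (Z_le_gt_dec (sigma j) (sigma r)) as [| Hgt]; [assumption |].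
  exfalso; apply (Hmax (sigma j)); [split; [lia | now apply HU] | now exists j].
Qed.

Lemma admissible_unbounded_right (k M : Z) : exists r, k < r /\ M < sigma r.
Proof.
  apply NNPP; intro Hnone.
  destruct Hadm as [Hneg _].
  destruct (finite_setZ_bounded_above _ Hneg) as [N HN].
  apply (not_finite_setZ_ray (Z.max k (Z.max 0 N))).
  apply (finite_setZ_subset _ (fun i => 1 <= sigma i <= M)).
  - intros i Hi; split.
    + apply NNPP; intro Hs.
      assert (HiN : inN i) by (unfold inN; lia).
      pose proof (HN i (conj HiN Hs)); lia.
    + apply Z.nlt_ge; intro Hs; apply Hnone; exists i; split; [lia | exact Hs].
  - apply (finite_setZ_preimage sigma (fun v => 1 <= v <= M) Hinj),
      finite_setZ_interval.
Qed.

Lemma record_index_weak (r : Z) :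
  (forall j, j < r -> sigma j <= sigma r) -> record_index sigma r.
Proof.
  intros Hle j Hj.
  assert (sigma j <> sigma r) by (intro E; apply Hinj in E; lia).
  pose proof (Hle j Hj); lia.
Qed.

Lemma record_index_below (k : Z) : exists r, record_index sigma r /\ r < k.
Proof.
  destruct (admissible_max_left (k - 1)) as [r [Hr Hmax]].
  exists r; split; [| lia].
  apply record_index_weak; intros j Hj; apply Hmax; lia.
Qed.

Lemma record_index_above (k : Z) : exists r, record_index sigma r /\ k < r.
Proof.
  destruct (admissible_max_left k) as [q [_ Hmax]].
  destruct (Z_least_above (fun j => sigma q < sigma j) (k + 1)) as [r [Hr [Hbig Hfirst]]].
  { destruct (admissible_unbounded_right k (sigma q)) as [r [Hr Hbig]].
    exists r; split; [lia | exact Hbig]. }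
  exists r; split; [| lia].
  intros j Hj.
  destruct (Z_le_gt_dec j k) as [Hjk | Hjk].
  - pose proof (Hmax j Hjk); lia.
  - pose proof (Hfirst j ltac:(lia)); lia.
Qed.

End Records.

Theorem lemma2p3 (sigma : Z -> Z) (Hadm : admissible sigma) (Hinj : injectiveZ sigma) :
  forall k : Z, exists rm rp : Z,
    record_index sigma rm /\ record_index sigma rp /\ rm < k /\ k < rp.
Proof.
  intro k.
  destruct (record_index_below sigma Hadm Hinj k) as [rm [Hrm Hlt]].
  destruct (record_index_above sigma Hadm Hinj k) as [rp [Hrp Hgt]].
  now exists rm, rp.
Qed.
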